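(* Let $G\in\mathbb{R}^{n_c\times n_z}$ have all rows nonzero, $S\in\mathbb{R}^{n_c\times n_x}$, $w\in\mathbb{R}^{n_c}$, and assume $\mathcal{V}=\{v\in\mathbb{R}^{n_x+n_z}: \bar Hv\le w\}\neq\emptyset$ where $\bar H=[-S,\;G]$. Let $i\in\{1,\dots,n_c\}$ and let $\sigma_i$ be as defined below. Then there is $M_0>0$ such that for every $M\ge M_0$, $$\sigma_i=\inf\Big\{r:\ v\in\mathcal{V},\ r\ge0,\ \delta\in\{0,1\}^{n_c},\ \frac{w_j-\bar H_jv}{\|\bar H_j\|}-M\delta_j<r\le\frac{w_j-\bar H_jv}{\|\bar H_j\|}+M(1-\delta_j)\ \forall j,\ \sum_{j=1}^{n_c}\delta_j<n_c-i\Big\},$$ i.e. $\sigma_i$ equals the optimal value of this mixed integer linear program (with $\inf\emptyset=+\infty$).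
   Context: $\bar H_j$ is the $j$-th row of $\bar H$, $w_j$ the $j$-th entry of $w$, $\mathcal{V}_j=\{v:\bar H_jv\le w_j\}$, $\mathcal{B}(v,r)$ the closed Euclidean ball. For $i\in\{1,\dots,n_c\}$, $\sigma_i=\sup\{r\ge0: \inf_{v\in\mathcal{V}}|\{j: \mathcal{B}(v,r)\subseteq\mathcal{V}_j\}|\ge n_c-i\}$ (possibly $+\infty$). The paper describes $M$ as ''a big number''; the claim makes this precise as ''for all sufficiently large $M$''. *)

From HB Require Import structures.
From mathcomp Require Import all_boot all_order all_algebra.
From mathcomp Require Import all_classical all_reals.
From mathcomp Require Import ereal.

Set Implicit Arguments. Unset Strict Implicit. Unset Printing Implicit Defensive.
Import Order.TTheory GRing.Theory Num.Theory.
Local Open Scope ring_scope.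
Local Open Scope classical_set_scope.

Section Defs.
Variable R : realType.

Definition Hbar (nc nx nz : nat) (S : 'M[R]_(nc, nx)) (G : 'M[R]_(nc, nz))
  : 'M[R]_(nc, nx + nz) := row_mx (- S) G.

Definition rownorm (m n : nat) (A : 'M[R]_(m, n)) (j : 'I_m) : R :=
  Num.sqrt (\sum_(k < n) A j k ^+ 2).

Definition enorm (n : nat) (v : 'cV[R]_n) : R :=
  Num.sqrt (\sum_(k < n) v k 0 ^+ 2).

Definition cball (n : nat) (v : 'cV[R]_n) (r : R) : set 'cV[R]_n :=
  [set u | enorm (u - v) <= r].

Definition Vj (m n : nat) (H : 'M[R]_(m, n)) (w : 'cV[R]_m) (j : 'I_m)
  : set 'cV[R]_n := [set v | (H *m v) j 0 <= w j 0].

Definition Vset (m n : nat) (H : 'M[R]_(m, n)) (w : 'cV[R]_m) : set 'cV[R]_n :=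
  [set v | forall j, (H *m v) j 0 <= w j 0].

Definition nfit (m n : nat) (H : 'M[R]_(m, n)) (w : 'cV[R]_m)
  (v : 'cV[R]_n) (r : R) : nat :=
  #|[set j : 'I_m | `[< cball v r `<=` Vj H w j >] ]|.

Definition sigma (m n : nat) (H : 'M[R]_(m, n)) (w : 'cV[R]_m) (i : nat)
  : \bar R :=
  ereal_sup [set r%:E | r in [set r : R | 0 <= r /\
     ((((m - i)%N%:R : R))%:E <= ereal_inf ((fun v : 'cV[R]_n => ((nfit H w v r)%:R : R)%:E) @` Vset H w))%E]].

Definition slack (m n : nat) (H : 'M[R]_(m, n)) (w : 'cV[R]_m)
  (j : 'I_m) (v : 'cV[R]_n) : R :=
  (w j 0 - (H *m v) j 0) / rownorm H j.

Definition milp_value (m n : nat) (H : 'M[R]_(m, n)) (w : 'cV[R]_m) (i : nat)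
  (M : R) : \bar R :=
  ereal_inf [set r%:E | r in [set r : R | exists (v : 'cV[R]_n) (delta : 'I_m -> bool),
     [/\ Vset H w v, 0 <= r,
         (forall j, slack H w j v - M * (delta j)%:R < r /\
                    r <= slack H w j v + M * (1 - (delta j)%:R)) &
         (\sum_(j < m) (delta j : nat) < m - i)%N]]].

End Defs.

(* For [r >= 0] the ball [B(v, r)] lies in [V_j] iff [r] is at most the
   normalised slack [s_j v]. Hence [sigma_i] is the largest [r] such that every
   [v] in [V] keeps at least [n_c - i] slacks [>= r], and, once the binaries of
   the MILP are forced to flag exactly those constraints, its value is the
   least [r] at which some [v] in [V] keeps fewer. Both are the critical radius
   [t* = min_(|U| > i) min_(v in V) max_(j in U) s_j v]. The inner linear
   programs are bounded below by [0], so they attain their minima; a minimiser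
   [v*] of the outer minimum has bounded slacks, which makes one big-M constant
   work for every [r] close to [t*]. *)

From HB Require Import structures.
From mathcomp Require Import all_boot all_order all_algebra.
From mathcomp Require Import all_classical all_reals.
From mathcomp Require Import ereal.
From mathcomp Require Import zify ring lra.

Set Implicit Arguments. Unset Strict Implicit. Unset Printing Implicit Defensive.
Import Order.TTheory GRing.Theory Num.Theory.
Local Open Scope ring_scope.
Local Open Scope classical_set_scope.

Section PolyhedralMinimum.
Variables (R : realFieldType) (V : lmodType R).

Definition affine (f : V -> R) :=
  forall x y t, f (x + t *: (y - x)) = f x + t * (f y - f x).

Lemma affine_root (g : V -> R) p u :
  affine g -> g p <= 0 -> 0 < g u ->
  exists t, [/\ 0 <= t, t <= 1 & g (p + t *: (u - p)) = 0].
Proof.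
move=> g_aff gp gu; have gpu : g p - g u < 0 by lra.
exists (g p / (g p - g u)); split.
- by rewrite ler_ndivlMr // mul0r.
- by rewrite ler_ndivrMr // mul1r; lra.
- by rewrite g_aff -[g u - g p]opprB mulrN divfK ?lt_eqF ?subrr.
Qed.

Variables (I : finType) (a : I -> V -> R) (f : V -> R).
Hypotheses (a_aff : forall k, affine (a k)) (f_aff : affine f).

Definition polyhedron (A E : {set I}) : set V :=
  [set p | (forall k, k \in A -> a k p <= 0) /\ (forall k, k \in E -> a k p = 0)].

Lemma polyhedron_convex A E p u t : polyhedron A E p -> polyhedron A E u ->
  0 <= t <= 1 -> polyhedron A E (p + t *: (u - p)).
Proof.
move=> [pA pE] [uA uE] /andP[t0 t1]; split=> k kP; rewrite a_aff.
  have := pA k kP; have := uA k kP; nra.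
by rewrite (pE k kP) (uE k kP) subrr mulr0 addr0.
Qed.

Lemma polyhedron_line E p u t : polyhedron finset.set0 E p -> polyhedron finset.set0 E u ->
  polyhedron finset.set0 E (p + t *: (u - p)).
Proof.
move=> [_ pE] [_ uE]; split=> [k|k kE]; first by rewrite inE.
by rewrite a_aff (pE k kE) (uE k kE) subrr mulr0 addr0.
Qed.

Lemma polyhedron_cut (A E : {set I}) g p u : g \in A -> polyhedron A E p ->
    polyhedron (A :\ g) E u -> 0 < a g u ->
  exists t, 0 <= t <= 1 /\ polyhedron (A :\ g) (g |: E) (p + t *: (u - p)).
Proof.
move=> gA pP uP gu.
have [t [t0 t1 gt]] := affine_root (a_aff g) (pP.1 g gA) gu.
exists t; split; first by rewrite t0 t1.
have [cA cE] : polyhedron (A :\ g) E (p + t *: (u - p)).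
  apply: polyhedron_convex; rewrite ?t0 //.
  by case: pP => pA pE; split=> // k /setD1P[_ /pA].
by split=> // k /setU1P[->|/cE].
Qed.

Lemma polyhedron_face (A E : {set I}) g : g \in A ->
  polyhedron (A :\ g) (g |: E) `<=` polyhedron A E.
Proof.
move=> gA p [pA pE]; split=> [k kA|k kE]; last by apply: pE; rewrite setU1r.
by have [->|kg] := eqVneq k g; [rewrite pE ?setU11 | apply: pA; rewrite !inE kg].
Qed.

Lemma polyhedronD1 (A E : {set I}) g p : g \in A ->
  polyhedron A E p <-> polyhedron (A :\ g) E p /\ a g p <= 0.
Proof.
move=> gA; split=> [[pA pE]|[[pA pE] gp]].
  by split; [split=> // k /setD1P[_ /pA] | exact: pA].
split=> // k kA; have [->//|kg] := eqVneq k g.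
by apply: pA; rewrite !inE kg.
Qed.

Definition bounded_below (X : set V) := exists lb, forall p, X p -> lb <= f p.

Definition attains_min (X : set V) := exists2 q, X q & forall p, X p -> f q <= f p.

Lemma bounded_below_affine_const E p q : bounded_below (polyhedron finset.set0 E) ->
  polyhedron finset.set0 E p -> polyhedron finset.set0 E q -> f q <= f p.
Proof.
move=> [lb lbP] pP qP; rewrite leNgt; apply/negP => fpq.
have fqp : 0 < f q - f p by lra.
pose t := (f q - lb + 1) / (f q - f p).
have := lbP _ (polyhedron_line t qP pP); rewrite f_aff.
rewrite -opprB mulrN divfK ?gt_eqF //; have := lbP q qP; lra.
Qed.

Lemma face_min_is_min (A E : {set I}) g u q : g \in A ->
    polyhedron (A :\ g) E u -> 0 < a g u ->
    (forall p, polyhedron A E p -> f u <= f p) ->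
    (forall p, polyhedron (A :\ g) (g |: E) p -> f q <= f p) ->
  forall p, polyhedron A E p -> f q <= f p.
Proof.
move=> gA uP gu fu qmin p pP.
have [t [/andP[t0 t1] cP]] := polyhedron_cut gA pP uP gu.
apply: le_trans (qmin _ cP) _; rewrite f_aff.
have := fu p pP; nra.
Qed.

(* If [f] is unbounded below after dropping the constraint [g], or its minimum
   there violates [g], the minimum must lie on the face [a g = 0]. *)
Lemma polyhedron_min_or_escape (A E : {set I}) g : g \in A ->
    polyhedron A E !=set0 -> bounded_below (polyhedron A E) ->
    (polyhedron (A :\ g) E !=set0 -> bounded_below (polyhedron (A :\ g) E) ->
       attains_min (polyhedron (A :\ g) E)) ->
  attains_min (polyhedron A E) \/
  exists u, [/\ polyhedron (A :\ g) E u, 0 < a g u &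
                forall p, polyhedron A E p -> f u <= f p].
Proof.
move=> gA [p0 p0P] [lb lbP] IH.
have [bnd|unbnd] := boolp.pselect (bounded_below (polyhedron (A :\ g) E)).
  have [|q qP qmin] := IH _ bnd; first by exists p0; case/(polyhedronD1 _ _ gA): p0P.
  have [gq|gq] := leP (a g q) 0; [left|right].
    by exists q => [|p /(polyhedronD1 _ _ gA)[pP _]]; [exact/(polyhedronD1 _ _ gA)|exact: qmin].
  by exists q; split=> // p /(polyhedronD1 _ _ gA)[pP _]; exact: qmin.
right; have /boolp.existsNP[u /boolp.not_implyP[uP /negP]] :
    ~ forall u, polyhedron (A :\ g) E u -> lb <= f u by move=> lbu; apply: unbnd; exists lb.
rewrite -ltNge => fu; exists u; split=> // [|p /lbP]; last by lra.
rewrite ltNge; apply/negP => gu; have := lbP u (proj2 (polyhedronD1 _ _ gA) (conj uP gu)).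
lra.
Qed.

Theorem polyhedron_min A E : polyhedron A E !=set0 ->
  bounded_below (polyhedron A E) -> attains_min (polyhedron A E).
Proof.
elim: {A}#|A| {-2}A (erefl #|A|) E => [|k IH] A cardA E P0 bnd.
  move/eqP: cardA; rewrite cards_eq0 => /eqP A0; subst A; case: P0 => p0 p0P.
  by exists p0 => // p pP; exact: bounded_below_affine_const bnd pP p0P.
have [g gA] : exists g, g \in A by apply/card_gt0P; rewrite cardA.
have cardAg : #|A :\ g| = k by move: cardA; rewrite (cardsD1 g A) gA; case.
have [//|[u [uP gu fu]]] := polyhedron_min_or_escape gA P0 bnd (IH _ cardAg E).
have F0 : polyhedron (A :\ g) (g |: E) !=set0.
  case: P0 => p0 p0P; have [t [_ cP]] := polyhedron_cut gA p0P uP gu.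
  by exists (p0 + t *: (u - p0)).
have Fbnd : bounded_below (polyhedron (A :\ g) (g |: E)).
  by case: bnd => lb lbP; exists lb => p /(polyhedron_face gA)/lbP.
have [q qF qmin] := IH _ cardAg _ F0 Fbnd.
by exists q; [exact: polyhedron_face qF | exact: face_min_is_min gA uP gu fu qmin].
Qed.

End PolyhedralMinimum.

Lemma sum_sqr_ge0 (R : realDomainType) n (x : 'I_n -> R) : 0 <= \sum_k x k ^+ 2.
Proof. by apply: sumr_ge0 => k _; exact: sqr_ge0. Qed.

Lemma sum_sqr_eq0 (R : realDomainType) n (x : 'I_n -> R) k :
  \sum_k x k ^+ 2 = 0 -> x k = 0.
Proof.
move=> x0; apply/eqP; rewrite -sqrf_eq0; apply/eqP.
by apply: (psumr_eq0P _ x0) => // i _; exact: sqr_ge0.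
Qed.

Lemma sum_mul_le_sqrt (R : rcfType) n (x y : 'I_n -> R) :
  \sum_k x k * y k <= Num.sqrt (\sum_k x k ^+ 2) * Num.sqrt (\sum_k y k ^+ 2).
Proof.
set S := \sum_k _; set X := \sum_k _; set Y := \sum_k _.
have [X0|Xpos] := eqVneq X 0.
  rewrite /S big1 ?mulr_ge0 ?sqrtr_ge0 // => k _.
  by rewrite (sum_sqr_eq0 _ X0) mul0r.
have {}Xpos : 0 < X by rewrite lt_def Xpos sum_sqr_ge0.
have SXY : S ^+ 2 <= X * Y.
  have : 0 <= \sum_k (X * y k - S * x k) ^+ 2 by exact: sum_sqr_ge0.
  rewrite (eq_bigr (fun k => X ^+ 2 * y k ^+ 2 - (2 * X * S) * (x k * y k)
                             + S ^+ 2 * x k ^+ 2)) => [|k _]; last by ring.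
  rewrite big_split sumrB /= -!mulr_sumr -/X -/Y -/S => h.
  by rewrite -(ler_pM2l Xpos); nra.
rewrite -sqrtrM ?sum_sqr_ge0 //; apply: le_trans (ler_norm S) _.
by rewrite -sqrtr_sqr ler_wsqrtr.
Qed.

Lemma rownorm_gt0 (R : realType) m n (A : 'M[R]_(m, n)) j :
  row j A != 0 -> 0 < rownorm A j.
Proof.
rewrite /rownorm sqrtr_gt0 lt_def sum_sqr_ge0 andbT; apply: contra => /eqP A0.
by apply/eqP/rowP => k; rewrite !mxE (sum_sqr_eq0 _ A0).
Qed.

Lemma row_Hbar_neq0 (R : realType) nc nx nz (S : 'M[R]_(nc, nx)) (G : 'M[R]_(nc, nz)) j :
  row j G != 0 -> row j (Hbar S G) != 0.
Proof.
apply: contraNneq; rewrite /Hbar row_row_mx -row_mx0.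
by case/eq_row_mx => _ ->.
Qed.

Lemma cball_sub_Vj (R : realType) m n (H : 'M[R]_(m, n)) (w : 'cV[R]_m) j v r :
  0 < rownorm H j -> 0 <= r -> cball v r `<=` Vj H w j <-> r <= slack H w j v.
Proof.
move=> a0 r0; rewrite /slack ler_pdivlMr //; set a := rownorm H j.
have Hj2 : \sum_k H j k ^+ 2 = a ^+ 2 by rewrite sqr_sqrtr ?sum_sqr_ge0.
have HvD d : (H *m (v + d)) j 0 = (H *m v) j 0 + \sum_k H j k * d k 0.
  by rewrite mulmxDr !mxE.
split=> [sub|le_ra u].
  pose d := \col_k (r / a * H j k).
  have d2 : \sum_k d k 0 ^+ 2 = r ^+ 2.
    under eq_bigr do rewrite mxE exprMn.
    by rewrite -mulr_sumr Hj2 -exprMn divfK ?gt_eqF.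
  have Hd : \sum_k H j k * d k 0 = r * a.
    under eq_bigr do rewrite mxE mulrCA -expr2.
    by rewrite -mulr_sumr Hj2 expr2 mulrA divfK ?gt_eqF.
  have : Vj H w j (v + d).
    by apply: sub; rewrite /cball /= addrAC subrr add0r /enorm d2 sqrtr_sqr ger0_norm.
  by rewrite /Vj /= HvD Hd; lra.
rewrite /cball /Vj /enorm /= => le_ur.
have -> : u = v + (u - v) by rewrite addrC subrK.
have CS := sum_mul_le_sqrt (fun k => H j k) (fun k => (u - v) k 0).
rewrite -/(rownorm H j) -/a in CS.
have := le_trans CS (ler_wpM2l (ltW a0) le_ur); rewrite HvD mulrC -/a; lra.
Qed.

Lemma sum_nat_of_bool (T : finType) (P : pred T) :
  (\sum_(j : T) P j)%N = #|[set j | P j]%SET|.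
Proof. by rewrite -sum1dep_card [RHS]big_mkcond; apply: eq_bigr => j _; case: (P j). Qed.

Lemma ereal_sup_EFin_max (R : realType) (X : set R) t :
  X t -> (forall r, X r -> r <= t) -> ereal_sup [set r%:E | r in X] = t%:E.
Proof.
move=> Xt tub; apply/eqP; rewrite eq_le ereal_sup_ubound ?andbT; last by exists t.
by apply: ge_ereal_sup => _ [r Xr <-]; rewrite lee_fin tub.
Qed.

Lemma ereal_inf_EFin_gt (R : realType) (X : set R) t :
  (forall r, X r -> t < r) -> (forall r, t < r <= t + 1 -> X r) ->
  ereal_inf [set r%:E | r in X] = t%:E.
Proof.
move=> Xgt Xitv; apply/eqP; rewrite eq_le; apply/andP; split.
  apply/lee_addgt0Pr => e e0; pose r := t + Num.min e 1.
  have [e1_gt0 e1_le_e e1_le1] : [/\ 0 < Num.min e 1, Num.min e 1 <= e & Num.min e 1 <= 1].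
    by rewrite lt_min e0 ltr01 !ge_min !lexx ?orbT.
  apply: ge_ereal_inf; exists r%:E; last by rewrite -EFinD lee_fin lerD2l.
  by exists r => //; apply: Xitv; apply/andP; split; rewrite /r; lra.
by apply: le_ereal_inf_tmp => _ [r Xr <-]; rewrite lee_fin ltW ?Xgt.
Qed.

Section CriticalRadius.
Variables (R : realType) (m n : nat) (H : 'M[R]_(m, n)) (w : 'cV[R]_m).
Hypothesis rownormH_gt0 : forall j, 0 < rownorm H j.

Local Notation s := (slack H w).

Lemma slack_affine j : affine (s j).
Proof. by move=> x y t; rewrite /slack mulmxDr -scalemxAr mulmxBr !mxE; ring. Qed.

Lemma Vset_slack v : Vset H w v <-> forall j, 0 <= s j v.
Proof.
split=> Vv j; first by rewrite divr_ge0 ?subr_ge0 ?(ltW (rownormH_gt0 j)).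
by have := Vv j; rewrite /slack pmulr_lge0 ?invr_gt0 // subr_ge0.
Qed.

Definition fitting v r : {set 'I_m} := [set j | (r <= s j v)%R]%SET.

Lemma nfit_slack v r : 0 <= r -> nfit H w v r = #|fitting v r|.
Proof.
move=> r0; apply: eq_card => j; rewrite [RHS]inE.
have := cball_sub_Vj w v (rownormH_gt0 j) r0.
by case=> fit1 fit2; apply/idP/idP => [/set_mem/asboolP/fit1|/fit2/asboolP/mem_set].
Qed.

Lemma in_setC_fitting v r j : (j \in ~: fitting v r) = (s j v < r).
Proof. by rewrite !inE ltNge. Qed.

Lemma card_fitting_lt i v r :
  (#|fitting v r| < m - i)%N = (i < #|~: fitting v r|)%N.
Proof. by have := cardsC (fitting v r); rewrite card_ord; lia. Qed.

(* The linear program in [(v, t)]: minimise [t] subject to [v] in [Vset H w]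
   and [s j v <= t] for [j] in [U]. *)
Lemma min_max_slack_exists (U : {set 'I_m}) : Vset H w !=set0 -> U != finset.set0 ->
  exists vs t, [/\ Vset H w vs, forall j, j \in U -> s j vs <= t &
    forall v, Vset H w v -> exists2 j, j \in U & t <= s j v].
Proof.
move=> [v0 Vv0] /set0Pn[j0 j0U].
pose a (k : bool * 'I_m) (p : 'cV[R]_n * R^o) :=
  if k.1 then s k.2 p.1 - p.2 else - s k.2 p.1.
pose A := [set k | k.1 ==> (k.2 \in U)]%SET.
have a_aff k : affine (a k).
  case: k => [[] j] x y t; rewrite /a /= slack_affine; first by rewrite -[t *: _]/(t * _); ring.
  by ring.
have snd_aff : affine (@snd 'cV[R]_n R^o) by [].
have polyE p : polyhedron a A finset.set0 p <->
    Vset H w p.1 /\ (forall j, j \in U -> s j p.1 <= p.2).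
  split=> [[pA _]|[Vp pU]].
    split=> [|j jU].
      by apply/Vset_slack => j; have := pA (false, j); rewrite inE oppr_le0; exact.
    by have := pA (true, j); rewrite inE /= jU subr_le0; exact.
  split=> -[[] j]; rewrite inE //= /a /=; first by move=> jU; rewrite subr_le0 pU.
  by rewrite oppr_le0; move/Vset_slack: Vp.
have max_slack v : exists2 j, j \in U & forall k, k \in U -> s k v <= s j v.
  by case: (arg_maxP (fun j => s j v) j0U) => j jU jmax; exists j.
have P0 : polyhedron a A finset.set0 !=set0.
  by have [j1 _ j1max] := max_slack v0; exists (v0, s j1 v0); exact/polyE.
have Pbnd : bounded_below (@snd 'cV[R]_n R^o) (polyhedron a A finset.set0).
  exists 0 => p /polyE[Vp pU]; apply: le_trans (pU _ j0U).
  by move/Vset_slack: Vp.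
have [q qP qmin] := polyhedron_min a_aff snd_aff P0 Pbnd.
case/polyE: qP => Vq qU; exists q.1, q.2; split=> // v Vv.
have [j jU jmax] := max_slack v; exists j => //.
by apply: (qmin (v, s j v)); exact/polyE.
Qed.

Definition critical_radius (i : nat) (t : R) (vs : 'cV[R]_n) : Prop :=
  [/\ 0 <= t, Vset H w vs,
      forall v r, Vset H w v -> r <= t -> (m - i <= #|fitting v r|)%N &
      forall r, t < r -> (#|fitting vs r| < m - i)%N].

(* [t] is the least, over the sets [U] of more than [i] constraints, of the
   optimal values of the linear programs of [min_max_slack_exists]. *)
Lemma critical_radius_exists i : (i < m)%N -> Vset H w !=set0 ->
  exists t vs, critical_radius i t vs.
Proof.
move=> lt_im V0.
have LP (U : {set 'I_m}) : exists p : R * 'cV[R]_n, (i < #|U|)%N ->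
    [/\ Vset H w p.2, forall j, j \in U -> s j p.2 <= p.1 &
        forall v, Vset H w v -> exists2 j, j \in U & p.1 <= s j v].
  have [ltiU|] := ltnP i #|U|; last by exists (0, 0).
  have [|vs [t LPt]] := min_max_slack_exists V0 (U := U).
    by rewrite -card_gt0; apply: leq_ltn_trans ltiU.
  by exists (t, vs).
have [F FP] := boolp.choice LP.
have ltiT : (i < #|[set: 'I_m]%SET|)%N by rewrite cardsT card_ord.
have [U0 ltiU0 U0min] := @real_arg_minP _ _ _ (fun U : {set 'I_m} => i < #|U|)%N
  (fun U => (F U).1) ltiT (fun U _ => num_real _).
have [Vvs vsU0 tP] := FP U0 ltiU0.
exists (F U0).1, (F U0).2; split=> //.
- have [j0 j0U0] : exists j0, j0 \in U0 by apply/card_gt0P; apply: leq_ltn_trans ltiU0.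
  by apply: le_trans (vsU0 j0 j0U0); move/Vset_slack: Vvs.
- move=> v r Vv le_rt; rewrite leqNgt card_fitting_lt; apply/negP => ltiC.
  have [_ _ /(_ v Vv)[j]] := FP _ ltiC; rewrite in_setC_fitting => jC le_s.
  have := U0min _ ltiC; lra.
- move=> r lt_tr; rewrite card_fitting_lt; apply: leq_trans ltiU0 (subset_leq_card _).
  by apply/fintype.subsetP => j /vsU0 le_s; rewrite in_setC_fitting; lra.
Qed.

Lemma sigma_critical i t vs : critical_radius i t vs -> sigma H w i = t%:E.
Proof.
case=> t0 Vvs fit_ge fit_lt; apply: ereal_sup_EFin_max.
  split=> //; apply: le_ereal_inf_tmp => _ [v Vv <-].
  by rewrite lee_fin ler_nat nfit_slack // fit_ge.
move=> r [r0 inf_ge]; rewrite leNgt; apply/negP => /fit_lt; apply/negP.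
rewrite -leqNgt -(ler_nat R) -lee_fin; apply: le_trans inf_ge _.
by rewrite -nfit_slack //; apply: ereal_inf_lbound; exists vs.
Qed.

(* The big-M constraints force [delta j = 1] exactly on the fitting
   constraints, once [M] dominates [r] and all slacks at [vs]. *)
Lemma milp_value_critical i t vs M : critical_radius i t vs ->
  t + 1 + \sum_j s j vs <= M -> milp_value H w i M = t%:E.
Proof.
case=> t0 Vvs fit_ge fit_lt leM.
have slack0 := proj1 (Vset_slack vs) Vvs.
have sum0 : 0 <= \sum_k s k vs by exact: sumr_ge0.
have slack_leM j : s j vs <= M.
  have : s j vs <= \sum_k s k vs by rewrite (bigD1 j) //= lerDl sumr_ge0.
  lra.
apply: ereal_inf_EFin_gt => [r [v [d [Vv r0 dP sum_d]]]|r /andP[lt_tr le_r]].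
  rewrite ltNge; apply/negP => /(fit_ge v r Vv); rewrite leqNgt => /negP; apply.
  apply: leq_ltn_trans sum_d; rewrite sum_nat_of_bool; apply: subset_leq_card.
  apply/fintype.subsetP => j; rewrite !inE => le_rs.
  by have [+ _] := dP j; case: (d j) => //=; rewrite mulr0 subr0; lra.
exists vs, (fun j => r <= s j vs); split=> //; first lra.
  move=> j; have := slack_leM j; have := slack0 j.
  by case: (lerP r (s j vs)) => /= hr h0 hM; rewrite ?subrr ?mulr0 ?mulr1 ?subr0 ?addr0; split; lra.
by rewrite sum_nat_of_bool fit_lt.
Qed.

Lemma sigma_pinfty i : (m <= i)%N -> sigma H w i = +oo%E.
Proof.
rewrite -subn_eq0 /sigma => /eqP ->.
have Xge0 r : 0 <= r -> 0 <= r /\ (((0%N%:R : R))%:E <= ereal_inf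
    ((fun v => (nfit H w v r)%:R%:E) @` Vset H w))%E.
  by split=> //; apply: le_ereal_inf_tmp => _ [v _ <-]; rewrite lee_fin ler0n.
apply: hasNub_ereal_sup; last by exists 0; exact: Xge0.
move=> [b bP]; have := bP _ (Xge0 (`|b| + 1) (addr_ge0 (normr_ge0 b) ler01)).
have := ler_norm b; lra.
Qed.

Lemma milp_value_pinfty i M : (m <= i)%N -> milp_value H w i M = +oo%E.
Proof.
rewrite -subn_eq0 => /eqP mi0; apply/eqP; rewrite eq_le leey /=.
by apply: le_ereal_inf_tmp => y [r [v [d [_ _ _ +]]] _]; rewrite mi0 ltn0.
Qed.

End CriticalRadius.

Theorem lemma7 (R : realType) (nc nx nz : nat)
  (G : 'M[R]_(nc, nz)) (S : 'M[R]_(nc, nx)) (w : 'cV[R]_nc) (i : nat) :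
  (forall j : 'I_nc, row j G != 0) ->
  Vset (Hbar S G) w !=set0 ->
  (1 <= i <= nc)%N ->
  exists M0 : R, 0 < M0 /\
    forall M : R, M0 <= M ->
      sigma (Hbar S G) w i = milp_value (Hbar S G) w i M.
Proof.
move=> rowG_neq0 V0 _; set H := Hbar S G.
have rowH_gt0 j : 0 < rownorm H j by apply/rownorm_gt0/row_Hbar_neq0.
have [lt_i_nc|le_nc_i] := ltnP i nc; last first.
  by exists 1; split=> // M _; rewrite sigma_pinfty ?milp_value_pinfty.
have [t [vs crit]] := critical_radius_exists rowH_gt0 lt_i_nc V0.
have [t0 Vvs _ _] := crit.
have sum0 : 0 <= \sum_j slack H w j vs.
  by apply: sumr_ge0 => j _; move/(Vset_slack w rowH_gt0): Vvs.
exists (t + 1 + \sum_j slack H w j vs); split=> [|M leM]; first lra.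
by rewrite (sigma_critical rowH_gt0 crit) (milp_value_critical rowH_gt0 crit leM).
Qed.
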